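(* Let $\mathbf{A}$ be a finite ordered metric space and $p$ a partial isomorphism of $\mathbf{A}$. Let $\mathbf{B}$ be a finite metric space containing $\mathbf{A}$ as a metric subspace, and let $q$ be a partial isometry of $\mathbf{B}$ extending $p$ with $\mathrm{Per}(q)=\mathrm{Fix}(q)$. Suppose that for all $x\in\mathrm{dom}(q)$: $q(x)\in\mathbf{A}$ if and only if $x\in\mathrm{dom}(p)$. Then there is a linear order on $\mathbf{B}$ extending the order of $\mathbf{A}$ such that $q$ is a partial isomorphism of the resulting ordered metric space $\mathbf{B}$.
   Context: An ordered metric space is a triple $(A,d,<)$ with $d$ a metric on $A$ and $<$ a linear order on $A$. A partial isometry of a metric space is an isometry between finite subsets of it; a partial isomorphism of an ordered metric space is a partial isometry that also preserves the order on its domain. $\mathrm{Fix}(q)=\{x\in\mathrm{dom}(q):q(x)=x\}$; $x\in\mathrm{dom}(q)$ is periodic if there is $n>0$ with $x,q(x),\dots,q^n(x)$ all defined and $q^n(x)=x$, and $\mathrm{Per}(q)$ is the set of periodic points. *)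

From mathcomp Require Import all_boot.
From Stdlib Require Import Reals.
Set Implicit Arguments. Unset Strict Implicit. Unset Printing Implicit Defensive.

Local Open Scope R_scope.

Definition is_metric (X : Type) (d : X -> X -> R) : Prop :=
  (forall x y, 0 <= d x y) /\
  (forall x y, d x y = 0 <-> x = y) /\
  (forall x y, d x y = d y x) /\
  (forall x y z, d x z <= d x y + d y z).

Definition strict_linear_on (X : Type) (S : X -> Prop) (lt : X -> X -> Prop) : Prop :=
  (forall x, S x -> ~ lt x x) /\
  (forall x y z, S x -> S y -> S z -> lt x y -> lt y z -> lt x z) /\
  (forall x y, S x -> S y -> x <> y -> lt x y \/ lt y x).

(* Partial maps X -> X are functions X -> option X; dom f = {x | f x <> None}.
   On a finite type the domain is automatically finite. *)
Definition pdom (X : Type) (f : X -> option X) (x : X) : Prop := exists y, f x = Some y.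

Definition partial_isometry_on (X : Type) (d : X -> X -> R) (S : X -> Prop)
    (f : X -> option X) : Prop :=
  (forall x y, f x = Some y -> S x /\ S y) /\
  (forall x y x' y', f x = Some x' -> f y = Some y' -> d x' y' = d x y).

Definition order_preserving (X : Type) (lt : X -> X -> Prop) (f : X -> option X) : Prop :=
  forall x y x' y', f x = Some x' -> f y = Some y' -> lt x y -> lt x' y'.

Fixpoint piter (X : Type) (f : X -> option X) (n : nat) (x : X) : option X :=
  match n with
  | O => Some x
  | S m => match piter f m x with Some y => f y | None => None end
  end.

Definition Fix (X : Type) (f : X -> option X) (x : X) : Prop := f x = Some x.

Definition Per (X : Type) (f : X -> option X) (x : X) : Prop :=
  pdom f x /\ exists n, (0 < n)%nat /\ piter f n x = Some x.

From mathcomp Require Import all_boot.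
From Stdlib Require Import Reals Classical.

Set Implicit Arguments.
Unset Strict Implicit.
Unset Printing Implicit Defensive.

(* Points of B outside A are added one at a time, keeping the invariant
   [admissible]: a linear order on the current A and a partial isomorphism
   p of it contained in q, with q x in A exactly when x is in dom p.
   Injectivity of q and Per q = Fix q provide a new point b whose
   q-preimages lie in A or are b itself: otherwise, following preimages
   outside A would close a cycle through a periodic point that is not fixed.
   If a in A is the preimage of b, then b is inserted just below the images
   p x of the points x above a, and p is extended by a |-> b; since p is
   order preserving, the p y with y below a stay below b.  Once A = B, every
   point of dom q has its image in A, so q = p preserves the order. *)

Lemma piter_Sr (X : Type) (f : X -> option X) n x :
  piter f n.+1 x = if f x is Some y then piter f n y else None.
Proof.
elim: n x => [|n IHn] x; first by rewrite /=; case: (f x).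
rewrite -[LHS]/(if piter f n.+1 x is Some y then f y else None) IHn.
by case: (f x).
Qed.

Section Insertion.
Variable B : finType.

Definition insert_at (A : {set B}) (lt : B -> B -> Prop) (b : B) (P : B -> Prop)
    (x y : B) : Prop :=
  [\/ [/\ x \in A, y \in A & lt x y], [/\ x = b, y \in A & P y]
    | [/\ x \in A, y = b & ~ P x]].

Variables (A : {set B}) (lt : B -> B -> Prop) (b : B) (P : B -> Prop).
Hypothesis bNA : b \notin A.

Lemma insert_at_restr x y :
  x \in A -> y \in A -> insert_at A lt b P x y <-> lt x y.
Proof.
move=> xA yA; split=> [[[] | [Ex] | [_ Ey]] // | ]; last by constructor 1.
- by case/negP: bNA; rewrite -Ex.
- by case/negP: bNA; rewrite -Ey.
Qed.

Hypothesis lt_linear : strict_linear_on (fun x => x \in A) lt.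
Hypothesis P_up : forall y z, y \in A -> z \in A -> P y -> lt y z -> P z.

Lemma insert_at_linear :
  strict_linear_on (fun x => x \in b |: A) (insert_at A lt b P).
Proof.
have [lt_irr [lt_trans lt_total]] := lt_linear.
have neq_b x : x \in A -> x <> b by move=> xA Ex; case/negP: bNA; rewrite -Ex.
split; [|split].
- move=> x _ [[xA _ /(lt_irr x xA)] // | [Ex xA _] | [xA Ex _]];
    by have := neq_b x xA.
- move=> x y z _ _ _ [[xA yA lxy] | [-> yA Py] | [xA -> nPx]].
  + case=> [[_ zA lyz] | [Ey] | [_ -> nPy]].
    * by constructor 1; split=> //; exact: lt_trans xA yA zA lxy lyz.
    * by have := neq_b y yA.
    * by constructor 3; split=> // Px; exact: nPy (P_up xA yA Px lxy).
  + case=> [[_ zA lyz] | [Ey] | [_ _ nPy] //].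
    * by constructor 2; split=> //; exact: P_up yA zA Py lyz.
    * by have := neq_b y yA.
  + case=> [[bA] | [_ zA Pz] | [bA]]; [by have := neq_b b bA | | by have := neq_b b bA].
    constructor 1; split=> //.
    have [Exz | nxz] := eqVneq x z; first by case: nPx; rewrite Exz.
    case: (lt_total x z xA zA (elimN eqP nxz)) => // lzx.
    by case: nPx; exact: P_up zA xA Pz lzx.
- move=> x y; rewrite !in_setU1 => /predU1P[-> | xA] /predU1P[-> | yA] nxy //.
  + by have [Py | nPy] := classic (P y); [left; constructor 2 | right; constructor 3].
  + by have [Px | nPx] := classic (P x); [right; constructor 2 | left; constructor 3].
  + by case: (lt_total x y xA yA nxy) => lxy; [left | right]; constructor 1.
Qed.

End Insertion.

Section PreimageClosedPoint.
Variables (B : finType) (q : B -> option B).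

Lemma Per_of_preim_iter (C : pred B) (g : B -> B) b0 :
  injective g -> (forall b, C b -> C (g b) /\ q (g b) = Some b) -> C b0 ->
  Per q b0.
Proof.
move=> g_inj gC Cb0.
have C_iter k : C (iter k g b0) by elim: k => //= k IHk; have [] := gC _ IHk.
have piter_iter k : piter q k (iter k g b0) = Some b0.
  elim: k => // k IHk; rewrite piter_Sr iterS.
  by have [_ ->] := gC _ (C_iter k).
have back := piter_iter (order g b0); rewrite iter_order // in back.
split; last by exists (order g b0); split=> //; apply/ltP; exact: order_gt0.
move: back; rewrite -(orderSpred g b0) piter_Sr.
by case E: (q b0) => [y|] // _; exists y.
Qed.

Definition preim_in (S : {set B}) (b : B) : Prop := forall x, q x = Some b -> x \in S.

Hypothesis q_inj : forall x y z, q x = Some z -> q y = Some z -> x = y.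
Hypothesis Per_Fix : forall x, Per q x -> Fix q x.

Lemma exists_preim_closed (A : {set B}) b0 :
  b0 \notin A -> exists2 b, b \notin A & preim_in (b |: A) b.
Proof.
move=> b0A.
pose good b := [forall x, (q x == Some b) ==> (x \in b |: A)].
have [b /andP[bA /forallP good_b] | bad] := pickP [pred b | (b \notin A) && good b].
  by exists b => // x qx; apply: implyP (good_b x) _; rewrite qx.
pose g b := if b \in A then b
            else odflt b [pick x | (q x == Some b) && (x \notin b |: A)].
have gP b : b \notin A -> q (g b) = Some b /\ g b \notin b |: A.
  move=> bA; rewrite /g (negbTE bA); case: pickP => [x /andP[/eqP -> ->] // | none].
  move: (bad b); rewrite /= bA /= => /negbT; rewrite negb_forall => /existsP[x].
  by rewrite negb_imply => /andP[qx xN]; move: (none x); rewrite /= qx xN.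
have gNA b : b \notin A -> g b \notin A.
  by move=> /gP[_]; rewrite in_setU1 negb_or => /andP[].
have g_inj : injective g.
  move=> x y; case: (boolP (x \in A)) => xA; case: (boolP (y \in A)) => yA.
  - by rewrite /g xA yA.
  - by rewrite {1}/g xA => Exy; have := gNA y yA; rewrite -Exy xA.
  - by rewrite {2}/g yA => Exy; have := gNA x xA; rewrite Exy yA.
  - by move=> Exy; have [qx _] := gP x xA; have [qy _] := gP y yA; move: qx; rewrite Exy qy => -[].
have per_b0 : Per q b0.
  apply: (@Per_of_preim_iter [pred b | b \notin A] g) => // b bA.
  by split; [exact: gNA | exact: (gP b bA).1].
have [qg gb0] := gP b0 b0A.
by move: gb0; rewrite (q_inj qg (Per_Fix per_b0)) setU11.
Qed.

End PreimageClosedPoint.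

Section Extension.
Variables (B : finType) (q : B -> option B).
Hypothesis q_inj : forall x y z, q x = Some z -> q y = Some z -> x = y.

Record admissible (A : {set B}) (ltA : B -> B -> Prop) (p : B -> option B) : Prop :=
  Admissible {
    adm_linear : strict_linear_on (fun x => x \in A) ltA;
    adm_dom : forall x y, p x = Some y -> x \in A /\ y \in A;
    adm_mono : order_preserving ltA p;
    adm_sub : forall x y, p x = Some y -> q x = Some y;
    adm_codom : forall x y, q x = Some y -> (y \in A <-> pdom p x) }.

Lemma admissible_q_mono (A : {set B}) ltA p :
  (forall x, x \in A) -> admissible A ltA p -> order_preserving ltA q.
Proof.
move=> inA [_ _ p_mono p_sub p_codom].
have q_p x y : q x = Some y -> p x = Some y.
  move=> qx; have [z pz] := (p_codom _ _ qx).1 (inA y).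
  by move: qx; rewrite (p_sub _ _ pz) => -[<-].
by move=> x y x' y' /q_p px /q_p py; apply: p_mono.
Qed.

Section InsertPoint.
Variables (A : {set B}) (ltA : B -> B -> Prop) (p : B -> option B) (b : B).
Hypotheses (adm : admissible A ltA p) (bNA : b \notin A) (b_preim : preim_in q (b |: A) b).

(* Vacuously everything when [b] has no preimage in [A]; otherwise that
   preimage is unique. *)
Definition above_b (y : B) : Prop :=
  forall a, a \in A -> q a = Some b ->
  exists x z, [/\ ltA a x, p x = Some z & z = y \/ ltA z y].

Definition p_ins (x : B) : option B := if q x == Some b then Some b else p x.

Lemma above_b_up y z : y \in A -> z \in A -> above_b y -> ltA y z -> above_b z.
Proof.
have [[_ [lt_trans _]] p_dom _ _ _] := adm.
move=> yA zA up_y lyz a aA qa; have [x [z0 [lax pxz0 z0y]]] := up_y a aA qa.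
have [_ z0A] := p_dom _ _ pxz0.
exists x, z0; split=> //; right.
by case: z0y => [-> // | lz0y]; exact: lt_trans z0A yA zA lz0y lyz.
Qed.

Let lt_ins := insert_at A ltA b above_b.

Lemma above_b_fixed y : q b = Some b -> above_b y.
Proof. by move=> qb a aA /(q_inj qb) Eba; case/negP: bNA; rewrite Eba. Qed.

Lemma p_ins_mono : order_preserving lt_ins p_ins.
Proof.
have [A_linear p_dom p_mono _ _] := adm.
have [lt_irr [lt_trans _]] := A_linear.
have ins_linear := insert_at_linear bNA A_linear above_b_up.
have ins_restr := insert_at_restr ltA above_b bNA.
move=> x y x' y'; rewrite /p_ins.
case: (q x =P Some b) => [qx [<-] | _ px]; case: (q y =P Some b) => [qy [<-] | _ py].
- move=> lxy; have Exy := q_inj qx qy; rewrite -Exy in lxy.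
  by case: ins_linear => irr _; case: (irr x (b_preim qx) lxy).
- have [yA y'A] := p_dom _ _ py.
  move=> lxy; constructor 2; split=> // a aA qa; exists y, y'; split=> //; last by left.
  have Exa := q_inj qx qa; rewrite Exa in lxy.
  by apply/ins_restr.
- have [xA x'A] := p_dom _ _ px.
  move=> lxy; constructor 3; split=> // up_x'.
  have := b_preim qy; rewrite in_setU1 => /predU1P[Eyb | yA].
  + rewrite Eyb in qy lxy.
    case: lxy => [[_ bA _] | [Exb] | [_ _ []]]; last exact: above_b_fixed.
    * by case/negP: bNA.
    * by case/negP: bNA; rewrite -Exb.
  + have [x1 [z [lyx1 px1 zx']]] := up_x' y yA qy.
    have [x1A zA] := p_dom _ _ px1.
    have lxy' : ltA x y by apply/ins_restr.
    have lx'z := p_mono _ _ _ _ px px1 (lt_trans _ _ _ xA yA x1A lxy' lyx1).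
    case: zx' => [Ezx' | lzx']; first by rewrite Ezx' in lx'z; exact: lt_irr x'A lx'z.
    exact: lt_irr x' x'A (lt_trans _ _ _ x'A zA x'A lx'z lzx').
- have [xA x'A] := p_dom _ _ px; have [yA y'A] := p_dom _ _ py.
  by move/ins_restr => /(_ xA yA) /(p_mono _ _ _ _ px py) /ins_restr; apply.
Qed.

Lemma admissible_insert : admissible (b |: A) lt_ins p_ins.
Proof.
have [A_linear p_dom _ p_sub p_codom] := adm.
split.
- exact: insert_at_linear bNA A_linear above_b_up.
- move=> x y; rewrite /p_ins; case: eqP => [qx [<-] | _ /p_dom[xA yA]].
    by rewrite setU11 b_preim.
  by rewrite !in_setU1 xA yA !orbT.
- exact: p_ins_mono.
- by move=> x y; rewrite /p_ins; case: eqP => [-> | _ /p_sub].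
- move=> x y qxy; rewrite in_setU1 /pdom /p_ins qxy.
  have [-> | nyb] := eqVneq y b; first by split=> // _; exists b; rewrite eqxx.
  by rewrite (inj_eq (@Some_inj _)) (negbTE nyb); exact: p_codom qxy.
Qed.

End InsertPoint.

Hypothesis Per_Fix : forall x, Per q x -> Fix q x.

Lemma admissible_extend (A : {set B}) ltA p : admissible A ltA p ->
  exists lt : B -> B -> Prop,
    [/\ strict_linear_on (fun _ => True) lt,
        forall x y, x \in A -> y \in A -> (lt x y <-> ltA x y)
      & order_preserving lt q].
Proof.
have [n] := ubnP #|~: A|; elim: n A ltA p => // n IHn A ltA p cardA adm.
have [AT | [b0 b0A]] := set_0Vmem (~: A).
  have inA x : x \in A by apply/negbNE; rewrite -in_setC AT in_set0.
  have [[lt_irr [lt_trans lt_total]] _ _ _ _] := adm.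
  exists ltA; split=> //; last exact: admissible_q_mono adm.
  split; [|split] => [x _ | x y z _ _ _ | x y _ _];
    [apply: lt_irr | apply: lt_trans | apply: lt_total]; exact: inA.
rewrite in_setC in b0A.
have [b bA b_preim] := exists_preim_closed q_inj Per_Fix b0A.
have card_ins : #|~: (b |: A)| < n.
  rewrite ltnS in cardA; apply: leq_trans _ cardA; apply: proper_card.
  by rewrite properC; apply: properUr; rewrite sub1set.
have [lt [lt_linear lt_restr q_mono]] :=
  IHn _ _ _ card_ins (admissible_insert adm bA b_preim).
exists lt; split=> // x y xA yA.
by rewrite lt_restr ?in_setU1 ?xA ?yA ?orbT // insert_at_restr.
Qed.

End Extension.

Theorem proposition4p6 (B : finType) (d : B -> B -> R) (A : {set B})
    (ltA : B -> B -> Prop) (p q : B -> option B) :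
  is_metric d ->
  strict_linear_on (fun x => x \in A) ltA ->
  partial_isometry_on d (fun x => x \in A) p ->
  order_preserving ltA p ->
  partial_isometry_on d (fun _ => True) q ->
  (forall x y, p x = Some y -> q x = Some y) ->
  (forall x, Per q x <-> Fix q x) ->
  (forall x y, q x = Some y -> (y \in A <-> pdom p x)) ->
  exists lt : B -> B -> Prop,
    strict_linear_on (fun _ => True) lt /\
    (forall x y, x \in A -> y \in A -> (lt x y <-> ltA x y)) /\
    order_preserving lt q.
Proof.
move=> [_ [d_eq0 _]] A_linear [p_dom _] p_mono [_ q_isom] p_sub Per_Fix q_codom.
have q_inj x y z : q x = Some z -> q y = Some z -> x = y.
  by move=> qx qy; apply/d_eq0; rewrite -(q_isom _ _ _ _ qx qy); apply/d_eq0.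
have adm : admissible q A ltA p by split.
have [lt [lt_linear lt_restr q_mono]] :=
  admissible_extend q_inj (fun x => (Per_Fix x).1) adm.
by exists lt.
Qed.
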